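(* Let $n\ge 1$ and let $F$ be a permutation of $\mathbb{F}_{2^n}$ such that $F(x)=\mathrm{Inv}(x)$ for all $x\in\mathbb{F}_{2^n}\setminus P$, for some nonempty subset $P\subseteq\mathbb{F}_{2^n}$ with $0\in P$. If $c\in\mathbb{F}_{2^n}$ and $c\neq1$, then ${}_c\Delta_F\le \#P+2$.
   Context: $\mathrm{Inv}$ is the multiplicative inverse function on $\mathbb{F}_{2^n}$: $\mathrm{Inv}(x)=x^{2^n-2}$, so $\mathrm{Inv}(x)=x^{-1}$ for $x\neq0$ and $\mathrm{Inv}(0)=0$. For $F:\mathbb{F}_{2^n}\to\mathbb{F}_{2^n}$ and $c\in\mathbb{F}_{2^n}$, ${}_cD_aF(x)=F(x+a)+cF(x)$. For $a,b\in\mathbb{F}_{2^n}$, ${}_c\Delta_F(a,b)$ is the number of $x\in\mathbb{F}_{2^n}$ with ${}_cD_aF(x)=b$, and ${}_c\Delta_F=\max\{{}_c\Delta_F(a,b): a,b\in\mathbb{F}_{2^n},\ a\neq 0 \text{ if } c=1\}$. *)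

(* F_{2^n} is modeled as an arbitrary finite field K with #|K| = 2^n. *)
From mathcomp Require Import all_boot all_order all_algebra.
Set Implicit Arguments. Unset Strict Implicit. Unset Printing Implicit Defensive.
Import GRing.Theory.
Local Open Scope ring_scope.

Definition Inv (K : finFieldType) (n : nat) (x : K) : K := x ^+ (2 ^ n - 2)%N.

Definition cDer (K : finFieldType) (c a : K) (F : K -> K) (x : K) : K :=
  F (x + a) + c * F x.

Definition cDeltaAB (K : finFieldType) (c : K) (F : K -> K) (a b : K) : nat :=
  #|[set x : K | cDer c a F x == b]|.

Definition cDelta (K : finFieldType) (c : K) (F : K -> K) : nat :=
  \max_(ab : K * K | (c != 1) || (ab.1 != 0)) cDeltaAB c F ab.1 ab.2.

(** In characteristic 2 the shift [x |-> x + a] is an involution, so if both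
    [x] and [x + a] solve [F (x + a) + c F x = b] then, subtracting the two
    equations, [(1 - c) (F (x + a) - F x) = 0]; injectivity of [F] and
    [c <> 1] force [a = 0].  Hence for [a <> 0] at most one of [x], [x + a]
    is a solution, and the solutions [x] with [x] or [x + a] in [P] inject
    into [P].  The remaining solutions satisfy [(x + a)^-1 + c x^-1 = b] with
    [x, x + a <> 0] (as [0 \in P]), i.e. they are roots of the nonzero
    quadratic [b X^2 + (a b - 1 - c) X - a c], so there are at most two. *)

From mathcomp Require Import all_boot all_order all_algebra finfield.
From mathcomp Require Import ring.

Set Implicit Arguments.
Unset Strict Implicit.
Unset Printing Implicit Defensive.

Local Open Scope ring_scope.
Import GRing.Theory.

Lemma card_roots_lt_size (K : finFieldType) (p : {poly K}) :
  p != 0 -> (#|[set x | root p x]| < size p)%N.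
Proof.
move=> p_neq0; rewrite cardE; apply: max_poly_roots p_neq0 _ (enum_uniq _).
by apply/allP => x; rewrite mem_enum inE.
Qed.

Lemma expf_card_sub2 (K : finFieldType) (x : K) :
  x != 0 -> x ^+ (#|K| - 2) = x^-1.
Proof.
move=> x_neq0; apply: (mulIf x_neq0); rewrite mulVf // -exprSr.
apply: (mulIf x_neq0); rewrite mul1r -exprSr -addn2 subnK ?expf_card //.
exact: finNzRing_gt1.
Qed.

Lemma Inv_pow2 (K : finFieldType) (n : nat) (x : K) :
  #|K| = (2 ^ n)%N -> x != 0 -> Inv n x = x^-1.
Proof. by rewrite /Inv => <-; exact: expf_card_sub2. Qed.

Lemma card_inv_shift_eq_le2 (K : finFieldType) (a b c : K) : c != -1 ->
  (#|[set x : K | [&& x != 0, x + a != 0 & (x + a)^-1 + c * x^-1 == b]%R]|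
     <= 2)%N.
Proof.
move=> c_neqN1.
pose p : {poly K} := Poly [:: - (c * a); b * a - 1 - c; b].
have p_neq0 : p != 0.
  apply: contra c_neqN1 => /eqP p0.
  have := coef_Poly [:: - (c * a); b * a - 1 - c; b] 2.
  have := coef_Poly [:: - (c * a); b * a - 1 - c; b] 1.
  rewrite -/p p0 !coef0 /= => /esym/eqP + /esym b0.
  by rewrite b0 mul0r sub0r -opprD oppr_eq0 addrC addr_eq0.
have roots_le2 : (#|[set x | root p x]| <= 2)%N.
  by rewrite -ltnS (leq_trans (card_roots_lt_size p_neq0) (size_Poly _)).
apply: leq_trans roots_le2; apply/subset_leq_card/subsetP => x.
rewrite !inE => /and3P[x_neq0 xa_neq0 /eqP b_def].
rewrite /root /p horner_Poly /= -b_def; apply/eqP.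
by field; rewrite x_neq0 xa_neq0.
Qed.

Section LocallyInverse.

Variables (K : finFieldType) (F : K -> K) (P : {set K}) (c : K).
Hypotheses (pcharK2 : 2 \in [pchar K]) (F_inj : injective F).
Hypotheses (P0 : 0 \in P) (F_inv : forall x, x \notin P -> F x = x^-1).
Hypothesis c_neq1 : c != 1.

Lemma cDer_shift_eq a b x :
  cDer c a F x = b -> cDer c a F (x + a) = b -> a = 0.
Proof.
rewrite /cDer addrK_pchar2 // => e1 e2.
have : (F (x + a) - F x) * (1 - c) = b - b by rewrite -{1}e1 -e2; ring.
move/eqP; rewrite subrr mulf_eq0 [1 - c == 0]subr_eq0 [1 == c]eq_sym.
rewrite (negbTE c_neq1) orbF subr_eq0 => /eqP/F_inj.
by rewrite -{2}[x]addr0 => /addrI.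
Qed.

Lemma card_cDer_near_P a b :
  (#|[set x | (cDer c a F x == b) && ((x \in P) || (x + a \in P))%R]|
     <= #|P|)%N.
Proof.
set T := [set x | cDer c a F x == b].
set T1 := [set x in T | (x \notin P) && (x + a \in P)].
have T1_shift : (+%R^~ a) @: T1 \subset P :\: T.
  apply/subsetP => y /imsetP[x]; rewrite !inE => /andP[xT /andP[xNP xaP]] ->.
  rewrite xaP andbT; apply: contra xNP => xaT.
  by move: xaP; rewrite (cDer_shift_eq (eqP xT) (eqP xaT)) addr0.
rewrite -(cardsID T P) setIC.
apply: (@leq_trans #|(T :&: P) :|: T1|).
  apply/subset_leq_card/subsetP => x; rewrite !inE.
  by case: (x \in P); rewrite ?andbT ?andbF ?orbF.
apply: leq_trans (leq_card_setU _ _) _.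
rewrite leq_add2l -(card_imset T1 (addIr a)).
exact: subset_leq_card.
Qed.

Lemma card_cDer_off_P a b :
  (#|[set x | [&& cDer c a F x == b, x \notin P & x + a \notin P]%R]| <= 2)%N.
Proof.
apply: leq_trans (card_inv_shift_eq_le2 a b (_ : c != -1)); last first.
  by rewrite oppr_pchar2.
apply/subset_leq_card/subsetP => x; rewrite !inE /cDer.
case/and3P => /eqP <- xNP xaNP.
rewrite !F_inv // eqxx andbT.
by rewrite (contraNneq _ xNP) ?(contraNneq _ xaNP) // => ->.
Qed.

Lemma cDeltaAB_le a b : (cDeltaAB c F a b <= #|P| + 2)%N.
Proof.
rewrite /cDeltaAB -(cardsID [set x | (x \in P) || (x + a \in P)]).
apply: leq_add.
  apply: leq_trans (card_cDer_near_P a b).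
  by apply/subset_leq_card/subsetP => x; rewrite !inE.
apply: leq_trans (card_cDer_off_P a b).
apply/subset_leq_card/subsetP => x.
by rewrite !inE negb_or => /andP[/andP[-> ->] ->].
Qed.

End LocallyInverse.

Theorem mainTheorem3 (K : finFieldType) (n : nat) (hn : (1 <= n)%N)
  (hK : #|K| = (2 ^ n)%N) (F : K -> K) (hF : bijective F) (P : {set K})
  (hP0 : P != set0) (h0P : 0 \in P)
  (hFP : forall x : K, x \notin P -> F x = Inv n x)
  (c : K) (hc : c != 1) :
  (cDelta c F <= #|P| + 2)%N.
Proof.
have pcharK2 : 2 \in [pchar K] := card_finPcharP hK (isT : prime 2).
have F_inv x : x \notin P -> F x = x^-1.
  by move=> xNP; rewrite hFP // Inv_pow2 //; apply: contraNneq xNP => ->.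
apply/bigmax_leqP => ab _.
exact: cDeltaAB_le pcharK2 (bij_inj hF) h0P F_inv hc _ _.
Qed.
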